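(* Every structure over a binary signature which has bounded degree is ptp-conservative.
   Context: A binary signature consists of relation symbols of arity at most 2 and constants. A structure has bounded degree if there is $N$ such that every element occurs together with at most $N$ other elements in binary atoms. Positive types: for a structure $\mathcal C$ over signature $\Theta$, $e\in\mathcal C$, $n\in\mathbb N$, $ptp_n(\mathcal C,e,\Theta)$ is the set of conjunctive queries $\Psi(\bar x,y)$ with $|\bar x|<n$ over relations and constants of $\Theta$ (equality atoms $x=c$ allowed) with $\mathcal C\models\exists\bar x\Psi(\bar x,e)$; $d\equiv_n e$ iff their positive $n$-types coincide; $M_n^\Theta(\mathcal C)$ is the quotient $\mathcal C/\equiv_n$ where a tuple of classes is in $R$ iff some representatives are; $q_n$ is the quotient map. Colors are unary predicates $K^l_h$. A coloring of $\mathcal C$ (over $\Sigma$) is a structure $\bar{\mathcal C}$ over a finite signature $\bar\Sigma$ with $\Sigma\subseteq\bar\Sigma\subseteq\Sigma\cup\{K^l_h\}$, restricting to $\mathcal C$ on $\Sigma$, in which each element satisfies exactly one color. $\bar{\mathcal C}$ is $n$-conservative up to size $m$ if $ptp_m(\mathcal C,e,\Sigma)=ptp_m(M^{\bar\Sigma}_n(\bar{\mathcal C}),q_n(e),\Sigma)$ for every $e\in\mathcal C$. $\mathcal C$ is ptp-conservative if for every $m$ there exist $n$ and a coloring of $\mathcal C$ which is $n$-conservative up to size $m$. *)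

From mathcomp Require Import all_boot.
Set Implicit Arguments. Unset Strict Implicit. Unset Printing Implicit Defensive.

Record bsig := BSig { rel0 : finType; rel1 : finType; rel2 : finType; cst : finType }.

Record structure (S : bsig) := Struct {
  dom : Type;
  int0 : rel0 S -> Prop;
  int1 : rel1 S -> dom -> Prop;
  int2 : rel2 S -> dom -> dom -> Prop;
  intc : cst S -> dom }.
Arguments dom {S} s.
Arguments int0 {S} s _.
Arguments int1 {S} s _ _.
Arguments int2 {S} s _ _ _.
Arguments intc {S} s _.

(* Conjunctive queries Psi(x_0..x_{k-1}, y): TVar None is y, TVar (Some i) is x_i. *)
Inductive term (S : bsig) (k : nat) :=
  | TVar of option 'I_k
  | TCst of cst S.

Inductive atom (S : bsig) (k : nat) :=
  | A0 of rel0 S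
  | A1 of rel1 S & term S k
  | A2 of rel2 S & term S k & term S k
  | AEq of term S k & cst S.

Definition cq (S : bsig) (k : nat) := seq (atom S k).

Definition eval_term S (A : structure S) k (v : 'I_k -> dom A) (e : dom A)
  (t : term S k) : dom A :=
  match t with
  | TVar None => e
  | TVar (Some i) => v i
  | TCst c => intc A c
  end.

Definition holds_atom S (A : structure S) k (v : 'I_k -> dom A) (e : dom A)
  (a : atom S k) : Prop :=
  match a with
  | A0 r => int0 A r
  | A1 r t => int1 A r (eval_term v e t)
  | A2 r t1 t2 => int2 A r (eval_term v e t1) (eval_term v e t2)
  | AEq t c => eval_term v e t = intc A c
  end.

Definition sat_cq S (A : structure S) k (psi : cq S k) (e : dom A) : Prop :=
  exists v : 'I_k -> dom A, foldr (fun a P => holds_atom v e a /\ P) True psi.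

Arguments sat_cq {S} A {k} psi e.
Definition ptp S (A : structure S) (n : nat) (e : dom A) : forall k, cq S k -> Prop :=
  fun k psi => k < n /\ sat_cq A psi e.

Arguments ptp {S} A n e {k} _.
Definition ptp_equiv S (A : structure S) (n : nat) (d e : dom A) : Prop :=
  forall k (psi : cq S k), ptp A n d psi <-> ptp A n e psi.

Arguments ptp_equiv {S} A n d e.
Definition ptp_class S (A : structure S) (n : nat) (d : dom A) : dom A -> Prop :=
  fun d' => ptp_equiv A n d d'.

Arguments ptp_class {S} A n d _.
Definition qdom S (A : structure S) (n : nat) :=
  {P : dom A -> Prop | exists d, P = ptp_class A n d}.

Definition qmap S (A : structure S) (n : nat) (d : dom A) : qdom A n :=
  exist _ (ptp_class A n d) (ex_intro _ d erefl).

Arguments qmap {S} A n d.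
Definition quotient S (A : structure S) (n : nat) : structure S :=
  {| dom := qdom A n;
     int0 := int0 A;
     int1 := fun r X => exists d, sval X d /\ int1 A r d;
     int2 := fun r X Y => exists d d', sval X d /\ sval Y d' /\ int2 A r d d';
     intc := fun c => qmap A n (intc A c) |}.

Arguments quotient {S} A n.
(* Sigma-bar = Sigma extended by the colors K^l_h for (l,h) in the finite list K. *)
Definition colsig (S : bsig) (K : seq (nat * nat)) : bsig :=
  BSig (rel0 S) (rel1 S + seq_sub K)%type (rel2 S) (cst S).

Definition colored S (A : structure S) (K : seq (nat * nat))
  (col : seq_sub K -> dom A -> Prop) : structure (colsig S K) :=
  @Struct (colsig S K) (dom A) (int0 A)
    (fun (r : (rel1 S + seq_sub K)%type) d =>
       match r with inl r' => int1 A r' d | inr k => col k d end)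
    (int2 A) (intc A).

Arguments colored {S} A {K} col.
Definition reduct S K (B : structure (colsig S K)) : structure S :=
  @Struct S (dom B) (int0 B) (fun (r : rel1 S) d => int1 B (inl r) d)
    (int2 B) (intc B).

Arguments reduct {S K} B.
Definition is_coloring S (A : structure S) (K : seq (nat * nat)) (col : seq_sub K -> dom A -> Prop) :=
  forall d : dom A, exists! k : seq_sub K, col k d.

Arguments is_coloring {S A K} col.
Definition n_conservative S (A : structure S) (K : seq (nat * nat)) (col : seq_sub K -> dom A -> Prop)
  (n m : nat) : Prop :=
  forall (e : dom A) k (psi : cq S k),
    ptp A m e psi <->
    ptp (reduct (quotient (colored A col) n)) m (qmap (colored A col) n e) psi.

Arguments n_conservative {S A K} col n m.
Definition ptp_conservative S (A : structure S) : Prop :=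
  forall m : nat, exists (n : nat) (K : seq (nat * nat)) (col : seq_sub K -> dom A -> Prop),
    is_coloring col /\ n_conservative col n m.

Definition neighbour S (A : structure S) (e d : dom A) : Prop :=
  d <> e /\ exists r, int2 A r e d \/ int2 A r d e.

Arguments neighbour {S} A e d.
Definition bounded_degree S (A : structure S) : Prop :=
  exists N : nat, forall e : dom A,
    ~ exists f : 'I_N.+1 -> dom A, injective f /\ forall i, neighbour A e (f i).

From mathcomp Require Import all_boot zify boolp.
From mathcomp Require classical_sets.
From Stdlib Require List.
Set Implicit Arguments. Unset Strict Implicit. Unset Printing Implicit Defensive.

(* Fix m and colour C so that distinct elements at Gaifman distance at most
   L = 2m+2 get distinct colours; bounded degree makes finitely many colours
   enough (Zorn's lemma on partial colourings, balls having at most (D+1)^L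
   elements).  Let n = m+2.  The quotient map to M_n is a homomorphism, which
   gives one inclusion of positive types.  For the other, say that b dominates
   d up to p if every coloured query with fewer than p variables true at d is
   true at b.  If b dominates d up to p+1 and r(d, d'), then some w with r(b, w)
   dominates d' up to p: the r-successors of b having the colour of d' lie
   within distance 2 of each other, hence coincide, so the witness of the query
   "an r-successor of that colour satisfying phi" does not depend on phi.
   A query satisfied in M_n is then lifted to C variable by variable along a
   spanning forest of its Gaifman graph.  Adjacent variables land within
   distance 2k < L of each other, so the colouring forces the binary atoms
   between them to hold, and atoms with constants hold because the
   equality queries x = c pin the lifted elements down. *)

Section Neighbourhoods.
Variables (T : Type) (E : T -> T -> Prop).

Fixpoint within (l : nat) (a b : T) : Prop :=
  if l is l'.+1 then within l' a b \/ exists2 c, within l' a c & E c b else a = b.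

Lemma within_refl l a : within l a a.
Proof. by elim: l => //= l IH; left. Qed.

Lemma within_mono l l' a b : l <= l' -> within l a b -> within l' a b.
Proof. by move=> /subnK <-; elim: (l' - l) => //= j IH /IH; left. Qed.

Lemma within_step l a c b : within l a c -> E c b -> within l.+1 a b.
Proof. by move=> ac cb; right; exists c. Qed.

Lemma within_trans l l' a b c : within l a b -> within l' b c -> within (l + l') a c.
Proof.
move=> ab; elim: l' c => [|l' IH] c /=; first by move=> <-; rewrite addn0.
by rewrite addnS => -[/IH|[c' /IH ac' c'c]]; [left | right; exists c'].
Qed.

Hypothesis E_sym : forall a b, E a b -> E b a.

Lemma within_sym l a b : within l a b -> within l b a.
Proof.
elim: l a b => [|l IH] a b; first by move=> /= ->.
case=> [/IH|[c /IH ca cb]]; first by left.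
by rewrite -add1n; apply: within_trans ca; apply: within_step (within_refl 0 b) (E_sym cb).
Qed.

End Neighbourhoods.
Arguments within_refl {T E} l a.

Section Covers.
Variables (T : eqType) (E : T -> T -> Prop).

Definition covered (D : nat) (P : T -> Prop) :=
  exists2 s : seq T, size s <= D & forall x, P x -> x \in s.

Lemma covered_bigcup (s : seq T) D (P : T -> T -> Prop) :
  (forall c, covered D (P c)) ->
  covered (size s * D) (fun b => exists2 c, c \in s & P c b).
Proof.
move=> coverP; elim: s => [|c s [t szt tP]]; first by exists [::] => // x [].
have [u szu uP] := coverP c.
exists (u ++ t); first by rewrite size_cat mulSn leq_add.
move=> x [c']; rewrite inE mem_cat => /orP [/eqP -> /uP -> // | c's Px].
by rewrite tP ?orbT //; exists c'.
Qed.

Lemma within_covered D l a :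
  (forall c, covered D (E c)) -> covered (D.+1 ^ l) (within E l a).
Proof.
move=> E_cov; elim: l => [|l IH]; first by exists [:: a] => // x ->; rewrite inE.
have [s szs sP] := IH.
have step_cov c : covered D.+1 (fun b => c = b \/ E c b).
  have [t szt tP] := E_cov c.
  by exists (c :: t) => // b [-> | /tP]; rewrite inE ?eqxx // => ->; rewrite orbT.
have [u szu uP] := covered_bigcup s step_cov.
exists u; first by rewrite expnSr (leq_trans szu) // leq_mul2r szs orbT.
move=> b /= [ab | [c ac cb]]; apply: uP.
  by exists b; [apply: sP | left].
by exists c; [apply: sP | right].
Qed.

End Covers.

Lemma covered_of_no_injection (T : eqType) (P : T -> Prop) N :
  ~ (exists f : 'I_N.+1 -> T, injective f /\ forall i, P (f i)) -> covered N.+1 P.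
Proof.
move=> no_inj.
have grow j : covered j P \/
    exists s : seq T, [/\ size s = j, uniq s & forall x, x \in s -> P x].
  elim: j => [|j [[s szs sP] | [s [szs us sP]]]].
  - by right; exists [::].
  - by left; exists s => //; apply: leqW.
  case: (EM (forall x, P x -> x \in s)) => [cov | /existsNP [x /not_implyP [Px /negP xs]]].
    by left; exists s => //; rewrite szs.
  right; exists (x :: s); split=> [/=|/=|y]; rewrite ?szs ?xs ?us //.
  by rewrite inE => /predU1P [->|/sP].
case: (grow N.+1) => [//|[[|x0 s] [szs us sP]]] //.
case: no_inj; exists (fun i => nth x0 (x0 :: s) i); split.
  by move=> i j /eqP; rewrite nth_uniq ?szs // => /eqP /val_inj.
by move=> i; apply/sP/mem_nth; rewrite szs.
Qed.

Section Colouring.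
Variables (T : eqType) (G : T -> T -> Prop) (D : nat).
Hypothesis G_sym : forall a b, G a b -> G b a.
Hypothesis G_cov : forall a, covered D (G a).

Definition proper_partial_colouring (X : T * 'I_D.+1 -> Prop) :=
  (forall a i j, X (a, i) -> X (a, j) -> i = j) /\
  (forall a b i, a <> b -> G a b -> X (a, i) -> X (b, i) -> False).

Lemma proper_partial_colouring_chain (F : (T * 'I_D.+1 -> Prop) -> Prop) :
  (forall X, F X -> proper_partial_colouring X) ->
  classical_sets.total_on F classical_sets.subset ->
  proper_partial_colouring (classical_sets.bigcup F id).
Proof.
move=> FP Ftot.
have common p q X Y : F X -> F Y -> X p -> Y q ->
    exists2 Z, proper_partial_colouring Z & Z p /\ Z q.
  move=> FX FY Xp Yq; case: (Ftot X Y FX FY) => [XY | YX].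
    by exists Y; [apply: FP | split; [apply: XY|]].
  by exists X; [apply: FP | split; [|apply: YX]].
split=> [a i j [X FX Xai] [Y FY Yaj] | a b i ab Gab [X FX Xai] [Y FY Ybi]].
  by have [Z [Zfun _] [Zai Zaj]] := common _ _ _ _ FX FY Xai Yaj; apply: Zfun Zai Zaj.
by have [Z [_ Zprop] [Zai Zbi]] := common _ _ _ _ FX FY Xai Ybi; apply: Zprop Zai Zbi.
Qed.

Lemma proper_partial_colouring_extend X a :
  proper_partial_colouring X -> ~ (exists i, X (a, i)) ->
  exists i, proper_partial_colouring (fun p => X p \/ p.1 = a /\ p.2 = i).
Proof.
move=> [Xfun Xprop] a_free.
have [s szs sP] := G_cov a.
have /choice [f fP] b : exists i, (exists j, X (b, j)) -> X (b, i).
  case: (EM (exists j, X (b, j))) => [[j Xbj] | nX]; first by exists j.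
  by exists ord0 => /nX.
have used b j : G a b -> X (b, j) -> j \in map f s.
  by move=> Gab Xbj; rewrite -(Xfun _ _ _ (fP b (ex_intro _ j Xbj)) Xbj) map_f ?sP.
case: (pickP [pred i | i \notin map f s]) => [i /= i_free | all_used]; last first.
  have : #|'I_D.+1| <= #|map f s|.
    by apply/subset_leq_card/subsetP => i _; move: (all_used i) => /= /negbFE.
  rewrite card_ord => /leq_trans/(_ (card_size _)); rewrite size_map => /leq_trans/(_ szs).
  by rewrite ltnn.
exists i; split=> [b j j' | b b' j bb' Gbb'].
  case=> [Xbj | /= [eb ej]] [Xbj' | /= [eb' ej']]; subst => //; first exact: Xfun Xbj Xbj'.
  - by case: a_free; exists j.
  - by case: a_free; exists j'.
case=> [Xbj | /= [eb ej]] [Xb'j | /= [eb' ej']]; subst => //.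
- exact: Xprop bb' Gbb' Xbj Xb'j.
- by move: i_free; rewrite (used _ _ (G_sym Gbb') Xbj).
- by move: i_free; rewrite (used _ _ Gbb' Xb'j).
Qed.

Lemma proper_colouring :
  exists c : T -> 'I_D.+1, forall a b, a <> b -> G a b -> c a <> c b.
Proof.
have [X [[Xfun Xprop] Xmax]] :=
  @classical_sets.Zorn_bigcup _ proper_partial_colouring proper_partial_colouring_chain.
have /choice [c cP] a : exists i, X (a, i).
  apply: contrapT => a_free.
  have [i Yprop] := proper_partial_colouring_extend (conj Xfun Xprop) a_free.
  apply: Xmax Yprop; split=> [p Xp | YX]; first by left.
  by apply: a_free; exists i; apply: YX; right.
by exists c => a b ab Gab cab; apply: Xprop ab Gab (cP a) _; rewrite cab.
Qed.

End Colouring.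

Section Gaifman.
Variables (S : bsig) (C : structure S).

Definition gaifman (a b : dom C) := exists r, int2 C r a b \/ int2 C r b a.

Lemma gaifman_sym a b : gaifman a b -> gaifman b a.
Proof. by case=> r ab; exists r; tauto. Qed.

Lemma within1_gaifman a b : gaifman a b -> within gaifman 1 a b.
Proof. by right; exists a. Qed.

Lemma gaifman_covered :
  bounded_degree C -> exists D, forall a, @covered {classic dom C} D (gaifman a).
Proof.
case=> N deg; exists N.+2 => a.
have [s szs sP] := @covered_of_no_injection {classic dom C} _ _ (deg a).
exists (a :: s) => // b ab; rewrite inE; case: (EM (b = a)) => [->|ba]; first by rewrite eqxx.
by rewrite sP ?orbT //; split.
Qed.

Definition separated (K : seq (nat * nat)) (col : seq_sub K -> dom C -> Prop) L :=
  forall kc a b, within gaifman L a b -> col kc a -> col kc b -> a = b.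

Lemma separated_colouring_exists L : bounded_degree C ->
  exists K (col : seq_sub K -> dom C -> Prop), is_coloring col /\ separated col L.
Proof.
move=> /gaifman_covered [D gaifman_cov].
have [c c_proper] := @proper_colouring {classic dom C} _ _ (@within_sym _ _ gaifman_sym L)
  (fun a => within_covered L a gaifman_cov).
pose K := [seq (i, 0) | i <- iota 0 (D.+1 ^ L).+1].
have inK d : (val (c d), 0) \in K by rewrite map_f // mem_iota /=.
exists K, (fun kc d => ssval kc = (val (c d), 0)); split.
  by move=> d; exists (SeqSub (inK d)); split=> // kc kcE; apply: val_inj.
move=> kc a b ab -> [] /val_inj cab; apply: contrapT => /c_proper.
by move/(_ ab); rewrite cab.
Qed.

End Gaifman.
Arguments gaifman {S} C a b.

Lemma foldr_andP (T : Type) (h : T -> Prop) (s : seq T) :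
  foldr (fun a P => h a /\ P) True s <-> forall a, List.In a s -> h a.
Proof.
elim: s => [|x s IH] //=; rewrite IH.
split=> [[hx hs] a [<-|/hs] // | hs]; split=> [|a sa]; apply: hs; [left | right] => //.
Qed.

Definition rename_atom (T : bsig) j j' (f : term T j -> term T j') (a : atom T j) : atom T j' :=
  match a with
  | A0 r => A0 _ r
  | A1 r t => A1 r (f t)
  | A2 r t1 t2 => A2 r (f t1) (f t2)
  | AEq t c => AEq (f t) c
  end.

Lemma holds_rename_atoms (T : bsig) (A : structure T) j j' (f : term T j -> term T j')
    (v : 'I_j' -> dom A) x (v' : 'I_j -> dom A) x' (phi : cq T j) :
  (forall t, eval_term v x (f t) = eval_term v' x' t) ->
  foldr (fun a P => holds_atom v x a /\ P) True (map (rename_atom f) phi) <->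
  foldr (fun a P => holds_atom v' x' a /\ P) True phi.
Proof. by move=> fE; elim: phi => //= -[r|r t|r t1 t2|t c] phi IH /=; rewrite ?fE IH. Qed.

Definition edge_atom (T : bsig) j (dir : bool) (r : rel2 T) (t1 t2 : term T j) : atom T j :=
  if dir then A2 r t1 t2 else A2 r t2 t1.

Lemma holds_edge_atom (T : bsig) (A : structure T) j v x dir r (t1 t2 : term T j) :
  holds_atom (A := A) v x (edge_atom dir r t1 t2) <->
  (if dir then int2 A r (eval_term v x t1) (eval_term v x t2)
   else int2 A r (eval_term v x t2) (eval_term v x t1)).
Proof. by case: dir. Qed.

Section Domination.
Variables (S : bsig) (C : structure S) (K : seq (nat * nat)) (col : seq_sub K -> dom C -> Prop).
Local Notation S' := (colsig S K).
Local Notation CC := (colored C col).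
Local Notation near := (within (gaifman C)).

Definition rel2_dir (dir : bool) (r : rel2 S) (x w : dom C) :=
  if dir then int2 C r x w else int2 C r w x.

Lemma gaifman_rel2_dir dir r x w : rel2_dir dir r x w -> gaifman C x w.
Proof. by case: dir => xw; exists r; [left|right]. Qed.

Definition dominates p (b d : dom C) :=
  forall j (phi : cq S' j), j < p -> sat_cq CC phi d -> sat_cq CC phi b.

Lemma dominates_le p p' b d : p' <= p -> dominates p b d -> dominates p' b d.
Proof. by move=> p'p bd j phi jp'; apply: bd; apply: leq_trans p'p. Qed.

Lemma dominates_unary p b d (r : rel1 S') :
  dominates p.+1 b d -> int1 CC r d -> int1 CC r b.
Proof.
move=> bd rd.
by have [u [] //] := bd 0 [:: A1 r (TVar _ None)] isT (ex_intro _ (fun _ => d) (conj rd I)).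
Qed.

Lemma dominates_colour p b d kc : dominates p.+1 b d -> col kc d -> col kc b.
Proof. exact: (dominates_unary (r := inr kc)). Qed.

Definition shift_term j (t : term S' j) : term S' j.+1 :=
  match t with
  | TVar None => TVar _ (Some ord_max)
  | TVar (Some i) => TVar _ (Some (lift ord_max i))
  | TCst c => TCst _ c
  end.

Definition step_query dir r kc j (phi : cq S' j) : cq S' j.+1 :=
  edge_atom dir r (TVar _ None) (TVar _ (Some ord_max))
  :: A1 (inr kc : rel1 S') (TVar _ (Some ord_max))
  :: map (rename_atom (@shift_term j)) phi.

Lemma sat_step_query dir r kc j (phi : cq S' j) x :
  sat_cq CC (step_query dir r kc phi) x <->
  exists w, [/\ rel2_dir dir r x w, col kc w & sat_cq CC phi w].
Proof.
split=> [[u /= [/holds_edge_atom xw [kcw phi_w]]] | [w [xw kcw [u phi_w]]]].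
  exists (u ord_max); split=> //; exists (fun i => u (lift ord_max i)).
  by apply: (proj1 (holds_rename_atoms _ _)) phi_w; case=> [[i|]|c].
exists (fun i => if unlift ord_max i is Some i' then u i' else w).
split; first by apply/holds_edge_atom; case: dir xw => /=; rewrite unlift_none.
split; first by rewrite /= unlift_none.
apply: (proj2 (holds_rename_atoms _ _)) phi_w.
by case=> [[i|]|c] //=; rewrite ?liftK ?unlift_none.
Qed.

Lemma near_sym l a b : near l a b -> near l b a.
Proof. exact: (@within_sym _ _ (@gaifman_sym S C)). Qed.

Hypothesis col_ok : is_coloring col.
Variable L : nat.
Hypothesis L_ge2 : 2 <= L.
Hypothesis col_sep : separated col L.

Lemma dominates_step p dir r b d d' : 0 < p ->
  dominates p.+1 b d -> rel2_dir dir r d d' -> exists2 w, rel2_dir dir r b w & dominates p w d'.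
Proof.
move=> p_gt0 bd dd'; have [kc [kcd' _]] := col_ok d'.
have lift_query j (phi : cq S' j) : j < p -> sat_cq CC phi d' ->
    exists w, [/\ rel2_dir dir r b w, col kc w & sat_cq CC phi w].
  by move=> jp phi_d'; apply/sat_step_query/bd => //; apply/sat_step_query; exists d'.
have [w [bw kcw _]] := lift_query 0 [::] p_gt0 (ex_intro _ (fun _ => d') I).
exists w => // j phi jp /(lift_query j phi jp) [w' [bw' kcw' phi_w']].
suff -> : w = w' by [].
apply: col_sep kcw kcw'; apply: (within_mono L_ge2).
exact: within_trans (within1_gaifman (gaifman_sym (gaifman_rel2_dir bw)))
  (within1_gaifman (gaifman_rel2_dir bw')).
Qed.

Variable n : nat.
Hypothesis n_gt0 : 0 < n.
Local Notation M := (quotient CC n).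
Local Notation qmap := (qmap CC n).

Lemma ptp_equiv_sat d d' j (phi : cq S' j) :
  ptp_equiv CC n d d' -> j < n -> sat_cq CC phi d -> sat_cq CC phi d'.
Proof. by move=> dd' jn phi_d; have [/(_ (conj jn phi_d)) []] := dd' j phi. Qed.

Lemma qdom_equiv (X : qdom CC n) d d' : sval X d -> sval X d' -> ptp_equiv CC n d d'.
Proof.
case: X => P [d0 PE] /=; rewrite PE => d0d d0d' j phi.
by split=> [/(d0d j phi).2/(d0d' j phi).1 | /(d0d' j phi).2/(d0d j phi).1].
Qed.

Lemma qdom_nonempty (X : qdom CC n) : exists d, sval X d.
Proof. by case: X => P [d0 PE]; exists d0; rewrite /= PE. Qed.

Lemma qmap_self x : sval (qmap x) x.
Proof. by []. Qed.

Lemma sat_cq_qmap k (psi : cq S k) e : sat_cq C psi e -> sat_cq (reduct M) psi (qmap e).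
Proof.
case=> v /foldr_andP psi_v; exists (fun i => qmap (v i)); apply/foldr_andP.
have evalE t : eval_term (A := reduct M) (fun i => qmap (v i)) (qmap e) t =
    qmap (eval_term v e t) by case: t => [[i|]|c].
move=> [r|r t|r t1 t2|t c] /psi_v /=; rewrite ?evalE.
- by [].
- by exists (eval_term v e t).
- by exists (eval_term v e t1), (eval_term v e t2).
- by move=> ->.
Qed.

Definition dominates_class p b (X : qdom CC n) := forall d, sval X d -> dominates p b d.

Lemma dominates_class_le p p' b X :
  p' <= p -> dominates_class p b X -> dominates_class p' b X.
Proof. by move=> p'p bX d /bX; apply: dominates_le. Qed.

Lemma dominates_class_of p b X d :
  p <= n -> sval X d -> dominates p b d -> dominates_class p b X.
Proof.
move=> pn dX bd d' d'X j phi jp phi_d'; apply: (bd _ _ jp).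
exact: ptp_equiv_sat (qdom_equiv d'X dX) (leq_trans jp pn) phi_d'.
Qed.

Lemma dominates_class_self X d : sval X d -> dominates_class n d X.
Proof. by move=> dX d' d'X j phi; apply: ptp_equiv_sat (qdom_equiv d'X dX). Qed.

Lemma dominates_cst w d c : dominates 1 w d -> sval (qmap (intc C c)) d -> w = intc C c.
Proof.
move=> wd cd; pose phi : cq S' 0 := [:: AEq (TVar S' None) c].
have phi_c : sat_cq CC phi (intc C c) by exists (fun _ => intc C c).
by have [u [] //] := wd 0 phi isT (ptp_equiv_sat cd n_gt0 phi_c).
Qed.

Lemma int2_lift_near r b1 b2 (X1 X2 : qdom CC n) :
  dominates_class 2 b1 X1 -> dominates_class 2 b2 X2 -> int2 M r X1 X2 ->
  near L.-1 b1 b2 -> int2 C r b1 b2.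
Proof.
move=> b1X1 b2X2 [d1 [d2 [d1X1 [d2X2 d12]]]] b12.
have [w b1w wd2] := dominates_step (p := 1) (dir := true) isT (b1X1 _ d1X1) d12.
have [kc [kcd2 _]] := col_ok d2.
suff <- : w = b2 by [].
apply: col_sep (dominates_colour wd2 kcd2) (dominates_colour (b2X2 _ d2X2) kcd2).
have := within_trans (within1_gaifman (gaifman_sym (gaifman_rel2_dir b1w))) b12.
by rewrite add1n prednK // ltnW.
Qed.

Lemma rel2_lift_cst dir r b (X : qdom CC n) c :
  dominates_class 2 b X ->
  (if dir then int2 M r X (qmap (intc C c)) else int2 M r (qmap (intc C c)) X) ->
  rel2_dir dir r b (intc C c).
Proof.
move=> bX rXc; have [d [d' [dX d'c dd']]] :
    exists d d', [/\ sval X d, sval (qmap (intc C c)) d' & rel2_dir dir r d d'].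
  by case: dir rXc => -[d [d' [? [? ?]]]]; [exists d, d' | exists d', d].
have [w bw wd'] := dominates_step (p := 1) isT (bX _ dX) dd'.
by rewrite -(dominates_cst wd' d'c).
Qed.

Lemma holds_atom_lift k (v : 'I_k -> qdom CC n) (a : 'I_k -> dom C) e (atm : atom S k) :
  (forall t, dominates_class 2 (eval_term a e t) (eval_term (A := reduct M) v (qmap e) t)) ->
  (forall r s t, atm = A2 r (TVar S s) (TVar S t) ->
     near L.-1 (eval_term a e (TVar S s)) (eval_term a e (TVar S t))) ->
  holds_atom (A := reduct M) v (qmap e) atm -> holds_atom a e atm.
Proof.
move=> dom_t near_t; case: atm near_t => [r|r t|r t1 t2|t c] near_t //=.
- by case=> d [dX rd]; apply: (dominates_unary (r := inl r) (dom_t t d dX) rd).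
- case: t2 near_t (dom_t t2) => [s2|c2] near_t dom2; last exact: (rel2_lift_cst (dir := true)).
  case: t1 near_t (dom_t t1) => [s1|c1] near_t dom1; last exact: (rel2_lift_cst (dir := false)).
  by move=> r12; apply: int2_lift_near dom1 dom2 r12 (near_t _ _ _ erefl).
- move=> tc; have := dom_t t (intc C c); rewrite tc => /(_ (qmap_self _)) tcd.
  apply: (dominates_cst (d := intc C c)); last exact: qmap_self.
  exact: dominates_le tcd.
Qed.

Section QueryLifting.
Variables (k : nat) (psi : cq S k) (e : dom C) (v : 'I_k -> qdom CC n).
Hypothesis psi_v : forall atm, List.In atm psi -> holds_atom (A := reduct M) v (qmap e) atm.
Hypothesis k_n : k.+2 <= n.

Definition var_class (s : option 'I_k) : qdom CC n :=
  eval_term (A := reduct M) v (qmap e) (TVar S s).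

Definition query_adj (s t : option 'I_k) := exists r,
  List.In (A2 r (TVar S s) (TVar S t)) psi \/ List.In (A2 r (TVar S t) (TVar S s)) psi.

Lemma query_adj_sym s t : query_adj s t -> query_adj t s.
Proof. by case=> r st; exists r; tauto. Qed.

(* [A] is the set of variables already lifted, [dp s] the depth of [s] in the
   spanning forest, and [rho] the root of the tree being built: all query edges
   leaving [A] start in that tree. *)
Record partial_lift (A : {set option 'I_k}) (a : option 'I_k -> dom C)
    (dp : option 'I_k -> nat) (rho : dom C) : Prop := {
  plift_root : None \in A;
  plift_rootE : a None = e;
  plift_dom : forall s, s \in A -> dominates_class (n - dp s) (a s) (var_class s);
  plift_depth : forall s, s \in A -> dp s < #|A|;
  plift_adj : forall s t, s \in A -> t \in A -> query_adj s t -> near (dp s + dp t) (a s) (a t);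
  plift_frontier : forall s t, s \in A -> t \notin A -> query_adj s t -> near (dp s) rho (a s) }.

Lemma partial_lift_add A a dp rho x w dx rho' :
  partial_lift A a dp rho -> x \notin A ->
  dominates_class (n - dx) w (var_class x) -> dx <= #|A| -> near dx rho' w ->
  (forall t, t \in A -> query_adj x t -> near (dp t) rho' (a t)) ->
  (forall s t, s \in A -> t \notin x |: A -> query_adj s t -> near (dp s) rho' (a s)) ->
  partial_lift (x |: A) [eta a with x |-> w] [eta dp with x |-> dx] rho'.
Proof.
move=> pl xA wx dxA rho'w adj_x frontier.
have neq s : s \in A -> (s == x) = false by move=> sA; apply/eqP => sx; rewrite -sx sA in xA.
have [root rootE dom depth adj _] := pl.
split=> [|/=|s|s|s t|s t].
- by rewrite in_setU1 root orbT.
- by rewrite neq.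
- by rewrite in_setU1 => /predU1P [->|sA] /=; rewrite ?eqxx ?neq //; apply: dom.
- rewrite cardsU1 xA in_setU1 => /predU1P [->|sA] /=; rewrite ?eqxx ?neq // add1n.
  exact: ltnW (depth s sA).
- rewrite !in_setU1 => /predU1P [->|sA] /predU1P [->|tA] /=; rewrite ?eqxx ?neq //.
  + by move=> _; apply: within_refl.
  + by move=> /(adj_x _ tA) xt; apply: within_trans (near_sym rho'w) xt.
  + by move=> /query_adj_sym /(adj_x _ sA) xs; apply: within_trans (near_sym xs) rho'w.
  + exact: adj.
- rewrite in_setU1 => /predU1P [->|sA] /=; rewrite ?eqxx ?neq // => tA' st.
  exact: frontier tA' st.
Qed.

Lemma card_vars (A : {set option 'I_k}) : #|A| <= k.+1.
Proof. by have := max_card A; rewrite card_option card_ord. Qed.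

Lemma var_class_edge u y : query_adj u y -> exists dir r du dy,
  [/\ sval (var_class u) du, sval (var_class y) dy & rel2_dir dir r du dy].
Proof.
case=> r [/psi_v [du [dy [du_u [dy_y r_uy]]]] | /psi_v [dy [du [dy_y [du_u r_yu]]]]].
  by exists true, r, du, dy.
by exists false, r, du, dy.
Qed.

Lemma partial_lift_along_edge A a dp rho u y :
  partial_lift A a dp rho -> u \in A -> y \notin A -> query_adj u y ->
  exists a' dp', partial_lift (y |: A) a' dp' rho.
Proof.
move=> pl uA yA uy.
have [dir [r [du [dy [du_u dy_y r_uy]]]]] := var_class_edge uy.
have dpu_k : dp u <= k by have := plift_depth pl uA; have := card_vars A; lia.
have [w uw wdy] : exists2 w, rel2_dir dir r (a u) w & dominates (n - (dp u).+1) w dy.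
  apply: dominates_step r_uy; first lia.
  by rewrite subnSK; [apply: (plift_dom pl uA) | lia].
exists [eta a with y |-> w], [eta dp with y |-> (dp u).+1].
apply: (partial_lift_add pl) => //.
- exact: dominates_class_of (leq_subr _ _) dy_y wdy.
- exact (plift_depth pl uA).
- exact: within_step (plift_frontier pl uA yA uy) (gaifman_rel2_dir uw).
- by move=> t tA /query_adj_sym; exact (plift_frontier pl tA yA).
- by move=> s t sA; rewrite in_setU1 negb_or => /andP [_ tA]; exact (plift_frontier pl sA tA).
Qed.

Lemma partial_lift_new_root A a dp rho x :
  partial_lift A a dp rho -> x \notin A ->
  (forall s t, s \in A -> t \notin A -> ~ query_adj s t) ->
  exists a' dp' rho', partial_lift (x |: A) a' dp' rho'.
Proof.
move=> pl xA closed; have [d0 d0x] := qdom_nonempty (var_class x).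
exists [eta a with x |-> d0], [eta dp with x |-> 0], d0.
apply: (partial_lift_add pl) => //.
- by rewrite subn0; apply: dominates_class_self.
- by move=> t tA /query_adj_sym /(closed _ _ tA xA).
- by move=> s t sA; rewrite in_setU1 negb_or => /andP [_ tA] /(closed _ _ sA tA).
Qed.

Lemma partial_lift_grow A a dp rho x : partial_lift A a dp rho -> x \notin A ->
  exists y a' dp' rho', y \notin A /\ partial_lift (y |: A) a' dp' rho'.
Proof.
move=> pl xA.
case: (EM (exists s t, [/\ s \in A, t \notin A & query_adj s t])) => [[u [y [uA yA uy]]] | open].
  by have [a' [dp' pl']] := partial_lift_along_edge pl uA yA uy; exists y, a', dp', rho.
have [a' [dp' [rho' pl']]] : exists a' dp' rho', partial_lift (x |: A) a' dp' rho'.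
  by apply: partial_lift_new_root pl xA _ => s t sA tA st; apply: open; exists s, t.
by exists x, a', dp', rho'.
Qed.

Lemma partial_lift_total : exists a dp rho, partial_lift [set: option 'I_k] a dp rho.
Proof.
have init : partial_lift [set None] (fun _ => e) (fun _ => 0) e.
  split=> [|//|s|s|s t|s t]; rewrite ?set11 ?in_set1 ?cards1 //.
  by move=> /eqP ->; rewrite subn0; apply: dominates_class_self (qmap_self e).
suff grow j A a dp rho : #|~: A| = j -> partial_lift A a dp rho ->
    exists a' dp' rho', partial_lift [set: option 'I_k] a' dp' rho'.
  exact: grow _ _ _ _ _ erefl init.
elim: j A a dp rho => [|j IH] A a dp rho cardA pl.
  move/cards0_eq/(congr1 (@setC _)): cardA; rewrite setCK setC0 => AT.
  by exists a, dp, rho; rewrite -AT.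
have [x] : exists x, x \in ~: A by apply/set0Pn; rewrite -card_gt0 cardA.
rewrite inE => xA; have [y [a' [dp' [rho' [yA pl']]]]] := partial_lift_grow pl xA.
apply: IH pl'; have := cardsC A; have := cardsC (y |: A); rewrite cardsU1 yA; lia.
Qed.

Hypothesis k_L : 2 * k < L.

Lemma sat_cq_lift : sat_cq C psi e.
Proof.
have [a [dp [rho pl]]] := partial_lift_total.
have evalE s : eval_term (fun i => a (Some i)) e (TVar S s) = a s.
  by case: s => //=; rewrite (plift_rootE pl).
have dp_k s : dp s <= k by have := plift_depth pl (in_setT s); have := card_vars setT; lia.
exists (fun i => a (Some i)); apply/foldr_andP => atm atm_psi.
apply: holds_atom_lift (psi_v atm_psi).
  case=> [s|c]; last by apply: dominates_class_le (dominates_class_self (qmap_self _)); lia.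
  by rewrite evalE; apply: dominates_class_le (plift_dom pl (in_setT s)); have := dp_k s; lia.
move=> r s t atmE; rewrite !evalE.
apply: within_mono (plift_adj pl (in_setT s) (in_setT t) _); first by have := dp_k s; have := dp_k t; lia.
by exists r; left; rewrite -atmE.
Qed.

End QueryLifting.

End Domination.

Lemma sat_cq_of_quotient S (C : structure S) (K : seq (nat * nat))
    (col : seq_sub K -> dom C -> Prop) L n k (psi : cq S k) e :
  is_coloring col -> 2 <= L -> separated col L -> k.+2 <= n -> 2 * k < L ->
  sat_cq (reduct (quotient (colored C col) n)) psi (qmap (colored C col) n e) ->
  sat_cq C psi e.
Proof.
move=> col_ok L_ge2 col_sep k_n k_L [v /foldr_andP psi_v].
exact (sat_cq_lift col_ok L_ge2 col_sep (leq_trans (ltn0Sn k.+1) k_n) psi_v k_n k_L).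
Qed.

Theorem lemma19 (S : bsig) (C : structure S) :
  bounded_degree C -> ptp_conservative C.
Proof.
move=> deg m; have [K [col [col_ok col_sep]]] := separated_colouring_exists (2 * m).+2 deg.
exists m.+2, K, col; split=> // e k psi.
split=> -[km sat]; split=> //; first exact: sat_cq_qmap.
by apply: sat_cq_of_quotient col_ok _ col_sep _ _ sat; lia.
Qed.
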